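(* Let $k$ be a field, $n\ge2$, $d\ge2$, and $\mathbf{m}\in\mathbb{N}^n$ with $|\mathbf{m}|=d$ and $\max(\mathbf{m})<d$. Let $P=\mathcal{P}_{n,d,\mathbf{m}}$ and $V=V_{n,d}$. Then the cokernel $C=V/P$ of the inclusion $P\subseteq V$ is a cyclic $P$-module generated by the class $x_1^{m_1}\cdots x_n^{m_n}+P$.
   Context: Let $S=k[x_1,\dots,x_n]$. $T_{n,d}=\{\mathbf{a}\in\mathbb{N}^n:|\mathbf{a}|=d\}$ with $|\mathbf{a}|=\sum a_i$, $\max(\mathbf{a})=\max_i a_i$. $V_{n,d}\subseteq S$ is the $k$-subalgebra generated by all monomials of degree $d$ (the $d$th Veronese subring); $\mathcal{P}_{n,d,\mathbf{m}}\subseteq S$ is the $k$-subalgebra generated by all degree-$d$ monomials except $x_1^{m_1}\cdots x_n^{m_n}$ (the pinched Veronese ring). *)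

From HB Require Import structures.
From mathcomp Require Import all_boot all_order all_algebra.
From mathcomp Require Import multinomials.mpoly.
Unset Printing Implicit Defensive.
Import GRing.Theory.
Local Open Scope ring_scope.

Definition in_gen_subalg (k : fieldType) (n : nat)
  (G : {mpoly k[n]} -> Prop) (p : {mpoly k[n]}) : Prop :=
  forall Q : {mpoly k[n]} -> Prop,
    (forall c : k, Q c%:MP) ->
    (forall x y, Q x -> Q y -> Q (x + y)) ->
    (forall x y, Q x -> Q y -> Q (x * y)) ->
    (forall g, G g -> Q g) ->
    Q p.

Definition veronese_gens (k : fieldType) (n d : nat) (g : {mpoly k[n]}) : Prop :=
  exists a : 'X_{1..n}, mdeg a = d /\ g = 'X_[a].

Definition pinched_gens (k : fieldType) (n d : nat) (m : 'X_{1..n})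
  (g : {mpoly k[n]}) : Prop :=
  exists a : 'X_{1..n}, mdeg a = d /\ a <> m /\ g = 'X_[a].

Definition in_veronese (k : fieldType) (n d : nat) : {mpoly k[n]} -> Prop :=
  @in_gen_subalg k n (@veronese_gens k n d).

Definition in_pinched (k : fieldType) (n d : nat) (m : 'X_{1..n}) : {mpoly k[n]} -> Prop :=
  @in_gen_subalg k n (@pinched_gens k n d m).

(* The pinched ring P misses only the generator x^m of V, so every element of V
   is a polynomial in x^m with coefficients in P.  Since max(m) < d, the exponent
   m has two distinct coordinates i, j in its support; moving one unit from j to
   i and vice versa gives degree-d exponents a, b different from m with
   a + b = 2m, hence (x^m)^2 = x^a x^b lies in P and V = P + P x^m. *)
From HB Require Import structures.
From mathcomp Require Import all_boot all_order all_algebra.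
From mathcomp Require Import multinomials.mpoly.
From mathcomp Require Import ring zify.
Import GRing.Theory.
Local Open Scope ring_scope.

Section GeneratedSubalgebra.
Set Implicit Arguments.
Unset Strict Implicit.

Variables (k : fieldType) (n : nat).
Implicit Types (G H : {mpoly k[n]} -> Prop) (p q t : {mpoly k[n]}).
Local Notation in_gen_subalg := (@in_gen_subalg k n).

Lemma gen_subalgC G (c : k) : in_gen_subalg G c%:MP.
Proof. by move=> Q QC. Qed.

Lemma gen_subalg0 G : in_gen_subalg G 0.
Proof. by rewrite -mpolyC0; apply: gen_subalgC. Qed.

Lemma gen_subalg1 G : in_gen_subalg G 1.
Proof. by rewrite -mpolyC1; apply: gen_subalgC. Qed.

Lemma gen_subalgD G p q :
  in_gen_subalg G p -> in_gen_subalg G q -> in_gen_subalg G (p + q).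
Proof. by move=> Gp Gq Q QC QD QM QG; apply: (QD); [apply: Gp | apply: Gq]. Qed.

Lemma gen_subalgM G p q :
  in_gen_subalg G p -> in_gen_subalg G q -> in_gen_subalg G (p * q).
Proof. by move=> Gp Gq Q QC QD QM QG; apply: (QM); [apply: Gp | apply: Gq]. Qed.

Lemma gen_subalg_gen G p : G p -> in_gen_subalg G p.
Proof. by move=> Gp Q _ _ _ QG; apply: QG. Qed.

Lemma gen_subalg_adjoin_sqrt G H t p :
  (forall g, G g -> g = t \/ in_gen_subalg H g) ->
  in_gen_subalg H (t * t) ->
  in_gen_subalg G p ->
  exists a b, [/\ in_gen_subalg H a, in_gen_subalg H b & p = a + b * t].
Proof.
move=> GH Ht2 Gp.
pose P f := exists a b, [/\ in_gen_subalg H a, in_gen_subalg H b & f = a + b * t].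
apply: (Gp P) => [c | _ _ [a1 [b1 [Ha1 Hb1 ->]]] [a2 [b2 [Ha2 Hb2 ->]]]
                    | _ _ [a1 [b1 [Ha1 Hb1 ->]]] [a2 [b2 [Ha2 Hb2 ->]]] | g Gg].
- by exists c%:MP, 0; rewrite mul0r addr0; split; [apply: gen_subalgC | apply: gen_subalg0 |].
- exists (a1 + a2), (b1 + b2); rewrite mulrDl addrACA.
  by split; [apply: gen_subalgD | apply: gen_subalgD |].
- exists (a1 * a2 + b1 * b2 * (t * t)), (a1 * b2 + b1 * a2); split; last by ring.
  + by apply: gen_subalgD; apply: gen_subalgM => //; apply: gen_subalgM.
  + by apply: gen_subalgD; apply: gen_subalgM.
- case: (GH g Gg) => [-> | Hg].
    by exists 0, 1; rewrite add0r mul1r; split; [apply: gen_subalg0 | apply: gen_subalg1 |].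
  by exists g, 0; rewrite mul0r addr0; split; [| apply: gen_subalg0 |].
Qed.

End GeneratedSubalgebra.

Section ExponentExchange.
Set Implicit Arguments.
Unset Strict Implicit.

Variable n : nat.
Implicit Types (m : 'X_{1..n}) (i j : 'I_n).

Lemma mnm_two_support m :
  (0 < mdeg m)%N -> (forall i, m i < mdeg m)%N ->
  exists i j, [/\ i != j, (0 < m i)%N & (0 < m j)%N].
Proof.
move=> m_gt0 lt_m.
have [i mi_gt0] : exists i, (0 < m i)%N.
  apply/existsP; apply: contraTT m_gt0; rewrite negb_exists => /forallP m0.
  by rewrite -leqNgt leqn0 mdegE big1 // => j _; apply/eqP; rewrite -leqn0 leqNgt m0.
have [/existsP [j /andP[ji mj_gt0]] | ] := boolP [exists j, (j != i) && (0 < m j)%N].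
  by exists i, j; rewrite eq_sym ji.
rewrite negb_exists => /forallP mj0; have := lt_m i.
rewrite mdegE (bigD1 i) //= big1 ?addn0 ?ltnn // => j ji.
by apply/eqP; rewrite -leqn0 leqNgt; move: (mj0 j); rewrite ji.
Qed.

Definition mnm_exchange m i j : 'X_{1..n} := (m - U_(j) + U_(i))%MM.

Lemma mdeg_exchange m i j : (0 < m j)%N -> mdeg (mnm_exchange m i j) = mdeg m.
Proof.
move=> mj_gt0; have Ujm : (U_(j) <= m)%MM.
  by apply/mnm_lepP => l; rewrite mnm1E; case: eqP => // <-.
by rewrite mdegD mdeg1 -(mdeg1 j) -mdegD submK.
Qed.

Lemma mnm_exchange_neq m i j : i != j -> mnm_exchange m i j != m.
Proof.
move=> ij; apply/eqP => /mnmP /(_ i).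
by rewrite mnmDE mnmBE !mnm1E eqxx eq_sym (negbTE ij); lia.
Qed.

Lemma mnm_exchangeD m i j : (0 < m i)%N -> (0 < m j)%N ->
  (mnm_exchange m i j + mnm_exchange m j i = m + m)%MM.
Proof.
move=> mi_gt0 mj_gt0; apply/mnmP => l; rewrite !mnmDE !mnmBE !mnm1E.
by case: (eqVneq i l) => [il | _]; case: (eqVneq j l) => [jl | _]; subst; lia.
Qed.

End ExponentExchange.

Lemma pinched_mpolyX_sq (k : fieldType) (n d : nat) (m : 'X_{1..n}) :
  (0 < d)%N -> mdeg m = d -> (forall i : 'I_n, (m i < d)%N) ->
  @in_pinched k n d m ('X_[m] * 'X_[m]).
Proof.
move=> + md; rewrite -{}md => mdeg_gt0 lt_m.
have [i [j [ij mi_gt0 mj_gt0]]] := mnm_two_support mdeg_gt0 lt_m.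
rewrite -mpolyXD -(mnm_exchangeD mi_gt0 mj_gt0) mpolyXD.
apply: gen_subalgM; apply: gen_subalg_gen.
- exists (mnm_exchange m i j); split; rewrite ?mdeg_exchange //.
  by split=> //; apply/eqP; apply: mnm_exchange_neq.
- exists (mnm_exchange m j i); split; rewrite ?mdeg_exchange //.
  by split=> //; apply/eqP; apply: mnm_exchange_neq; rewrite eq_sym.
Qed.

Theorem corollary2p19 (k : fieldType) (n d : nat) (m : 'X_{1..n}) :
  (2 <= n)%N -> (2 <= d)%N -> mdeg m = d -> (forall i : 'I_n, (m i < d)%N) ->
  @in_veronese k n d 'X_[m] /\
  (forall v : {mpoly k[n]}, @in_veronese k n d v ->
     exists p q : {mpoly k[n]},
       @in_pinched k n d m p /\ @in_pinched k n d m q /\ v = p + q * 'X_[m]).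
Proof.
(* 2 <= n is implied by the other hypotheses (m has two support coordinates),
   and of 2 <= d only d > 0 is needed. *)
move=> _ d_ge2 md lt_m; split; first by apply: gen_subalg_gen; exists m; split.
move=> v Vv.
have Xm2 := @pinched_mpolyX_sq k n d m (ltnW d_ge2) md lt_m.
have [|p [q [Pp Pq ->]]] := gen_subalg_adjoin_sqrt _ Xm2 Vv.
  move=> _ [a [da ->]]; have [-> | am] := eqVneq a m; [by left | right].
  by apply: gen_subalg_gen; exists a; split; [|split; [apply/eqP|]].
by exists p, q.
Qed.
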